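(* Let $A_\bullet$ be a simplicial commutative ring, and let $a\in N_n(A)$, $b\in N_{n+1}(A)$, $c\in A_n$. Then: (1) if $ca^2=0$, then $s_0(c)q(a)\in N_{n+1}(A)$; (2) if in addition $c\,a\,s_0d_0(a)=0$ (in particular if $a$ is a cycle), then $s_0(c)q(a)$ is a cycle; (3) if $s_0(c)b^2=0$, then $s_0(c)q(d_0(b))$ is a boundary.
   Context: For $a\in A_n$ put $q(a)=s_0(a)s_1(a)\in A_{n+1}$. $N_n(A)=\bigcap_{1\le i\le n}\ker(d_i)$ is the normalized chain complex with differential $d_0$; cycles and boundaries refer to this complex. *)

From HB Require Import structures.
From mathcomp Require Import all_boot all_algebra.
Set Implicit Arguments. Unset Strict Implicit. Unset Printing Implicit Defensive.
Import GRing.Theory.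
Local Open Scope ring_scope.

(* Indices are nats; values of d/s at out-of-range
   indices are irrelevant (never used). *)
Record scRing := SCRing {
  sc_obj :> nat -> comPzRingType;
  sc_d : forall n, nat -> {rmorphism sc_obj n.+1 -> sc_obj n};
  sc_s : forall n, nat -> {rmorphism sc_obj n -> sc_obj n.+1};
  sc_dd : forall n i j (x : sc_obj n.+2), (i < j)%N -> (j <= n.+2)%N ->
      sc_d n i (sc_d n.+1 j x) = sc_d n j.-1 (sc_d n.+1 i x);
  sc_ss : forall n i j (x : sc_obj n), (i <= j)%N -> (j <= n)%N ->
      sc_s n.+1 i (sc_s n j x) = sc_s n.+1 j.+1 (sc_s n i x);
  sc_ds_lt : forall n i j (x : sc_obj n.+1), (i < j)%N -> (j <= n.+1)%N ->
      sc_d n.+1 i (sc_s n.+1 j x) = sc_s n j.-1 (sc_d n i x);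
  sc_ds_eq : forall n j (x : sc_obj n), (j <= n)%N ->
      sc_d n j (sc_s n j x) = x;
  sc_ds_eq1 : forall n j (x : sc_obj n), (j <= n)%N ->
      sc_d n j.+1 (sc_s n j x) = x;
  sc_ds_gt : forall n i j (x : sc_obj n.+1), (j.+1 < i)%N -> (i <= n.+2)%N ->
      sc_d n.+1 i (sc_s n.+1 j x) = sc_s n j (sc_d n i.-1 x)
}.

Arguments sc_d {s n}.
Arguments sc_s {s n}.

Definition q (A : scRing) (n : nat) (a : A n.+1) : A n.+2 :=
  sc_s 0 a * sc_s 1 a.

Definition inN (A : scRing) (n : nat) : A n -> Prop :=
  match n return A n -> Prop with
  | 0 => fun _ => True
  | m.+1 => fun x => forall i, (1 <= i <= m.+1)%N -> sc_d i x = 0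
  end.

Definition isCycle (A : scRing) (n : nat) : A n -> Prop :=
  match n return A n -> Prop with
  | 0 => fun x => inN x
  | m.+1 => fun x => inN x /\ sc_d 0 x = 0
  end.

Definition isBoundary (A : scRing) (n : nat) (x : A n) : Prop :=
  inN x /\ exists y : A n.+1, inN y /\ sc_d 0 y = x.

From HB Require Import structures.
From mathcomp Require Import all_boot all_algebra zify.
Set Implicit Arguments. Unset Strict Implicit. Unset Printing Implicit Defensive.
Import GRing.Theory.
Local Open Scope ring_scope.

(* A face d_i with i >= 1 kills a degeneracy s_j x of a normalized x unless
   i is j or j+1. Hence on s_0(c) q(a) the only face d_i, i >= 1, that can
   survive is d_1, which gives c a^2, while d_0 gives c a s_0 d_0(a). For (3)
   shift the degeneracies up by one: y = s_0 s_0(c) s_1(b) s_2(b) has only d_2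
   surviving, equal to s_0(c) b^2, and d_0 y = s_0(c) q(d_0 b); since d_0 maps
   N_{n+1} into N_n, y witnesses the boundary. *)

Section NormalizedComplex.

Variable A : scRing.

Lemma inN_face0 n (y : A n.+1) : inN y -> inN (sc_d 0 y).
Proof.
case: n y => [//|n] y Ny i /andP[i_ge1 i_le].
by rewrite -(@sc_dd A n 0 i.+1) // Ny ?rmorph0 //; lia.
Qed.

Lemma face_degen_inN n i j (x : A n.+1) :
    inN x -> (1 <= i <= n.+2)%N -> (j <= n.+1)%N -> i != j -> i != j.+1 ->
  sc_d i (sc_s j x) = 0.
Proof.
move=> Nx /andP[i_ge1 i_le] j_le ij ij1.
case: (ltngtP i j) => [i_lt|j_lt|]; last by move/eqP: ij.
- by rewrite sc_ds_lt // Nx ?rmorph0 //; lia.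
- have j1_lt : (j.+1 < i)%N by rewrite ltn_neqAle eq_sym ij1.
  by rewrite sc_ds_gt // Nx ?rmorph0 //; lia.
Qed.

Lemma inN_s0_mul_q n (a c : A n.+1) :
  inN a -> c * a ^+ 2 = 0 -> inN (sc_s 0 c * q a).
Proof.
move=> Na ca2 i /andP[i_ge1 i_le]; rewrite /q !rmorphM.
have [i1 | i_ne1] := eqVneq i 1%N.
  by rewrite i1 !sc_ds_eq1 // sc_ds_eq // -mulrA -expr2.
by rewrite (@face_degen_inN n i 0 a) ?(mulr0, mul0r) //; lia.
Qed.

Lemma face0_s0_mul_q n (a c : A n.+1) :
  sc_d 0 (sc_s 0 c * q a) = c * a * sc_s 0 (sc_d 0 a).
Proof. by rewrite /q !rmorphM !sc_ds_eq // sc_ds_lt // mulrA. Qed.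

Definition q_lift n (c : A n.+1) (b : A n.+2) : A n.+3 :=
  sc_s 0 (sc_s 0 c) * sc_s 1 b * sc_s 2 b.

Lemma inN_q_lift n (c : A n.+1) (b : A n.+2) :
  inN b -> sc_s 0 c * b ^+ 2 = 0 -> inN (q_lift c b).
Proof.
move=> Nb cb2 i /andP[i_ge1 i_le]; rewrite /q_lift !rmorphM.
have [i1 | i_ne1] := eqVneq i 1%N.
  by rewrite i1 (@face_degen_inN n.+1 1 2 b) ?mulr0.
have [i2 | i_ne2] := eqVneq i 2%N.
  by rewrite i2 sc_ds_eq1 // sc_ds_eq // sc_ds_gt // sc_ds_eq1 // -mulrA -expr2.
by rewrite (@face_degen_inN n.+1 i 1 b) ?(mulr0, mul0r) //; lia.
Qed.

Lemma face0_q_lift n (c : A n.+1) (b : A n.+2) :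
  sc_d 0 (q_lift c b) = sc_s 0 c * q (sc_d 0 b).
Proof. by rewrite /q_lift /q !rmorphM sc_ds_eq // !sc_ds_lt // mulrA. Qed.

End NormalizedComplex.

Theorem lemma3p3 (A : scRing) (m : nat)
    (a : A m.+1) (b : A m.+2) (c : A m.+1) :
  inN a -> inN b ->
  [/\ (c * a ^+ 2 = 0 -> inN (sc_s 0 c * q a)),
      (c * a ^+ 2 = 0 -> c * a * sc_s 0 (sc_d 0 a) = 0 ->
         isCycle (sc_s 0 c * q a))
    & (sc_s 0 c * b ^+ 2 = 0 -> isBoundary (sc_s 0 c * q (sc_d 0 b)))].
Proof.
move=> Na Nb; split.
- exact: inN_s0_mul_q.
- by move=> ca2 ca_s0d0a; split; [exact: inN_s0_mul_q | rewrite face0_s0_mul_q].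
- move=> cb2; have Ny := inN_q_lift Nb cb2.
  rewrite -face0_q_lift; split; first exact: inN_face0.
  by exists (q_lift c b).
Qed.
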